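(* In the storage model of the context, let $(\alpha_{ij})$ be a positive solution of the linear system \[ \sum_{j=1}^{\kappa_i}\alpha_{ij}=\lambda_i\ (i=1,\dots,\mathcal K),\qquad \sum_{i=1}^{\mathcal K}\sum_{j=1}^{\kappa_i}\alpha_{ij}\,\delta_{\ell,s^i_j}=\tfrac1n\ (\ell=1,\dots,n), \] and let the embedded load chain $X^e(m)$ be constructed using the Join the Shortest Queue routing policy. Then for every $x\in\mathbb N^n$, \[ \mathbf E[f(X^e(m+1))-f(X^e(m))\mid X^e(m)=x]=-2\sum_{i=1}^{\mathcal K}\sum_{j\ne j_{\min}^{(i)}}\alpha_{ij}\bigl(x_{s^i_j}-x_{s^i_{j_{\min}}(x)}\bigr)+1-\frac1n, \] where $f(y)=\sum_{l=1}^n\bigl(y_l-\frac1n\sum_{k=1}^ny_k\bigr)^2$ and $j^{(i)}_{\min}$ is the index with $s^i_{j^{(i)}_{\min}}=s^i_{j_{\min}}(x)$.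
   Context: Storage model: $n$ nodes, non-empty neighborhoods $S_1,\dots,S_{\mathcal K}\subset\{1,\dots,n\}$ covering $\{1,\dots,n\}$, $\kappa_i=|S_i|$, $S_i=\{s^i_1,\dots,s^i_{\kappa_i}\}$ a fixed enumeration. Items arrive at $S_i$ as independent Poisson processes with rates $\lambda_i>0$, $\sum_i\lambda_i=1$. $X^e(m)\in\mathbb N^n$ is the vector of node loads after the $m$-th arrival. For $x\in\mathbb N^n$, $s^i_{j_{\min}}(x)$ is the first node of $S_i$ (in the enumeration) at which $x$ is minimal over $S_i$. Join the Shortest Queue (JSQ) routing policy: an item arriving at $S_i$ when the configuration is $x$ is stored at node $s^i_{j_{\min}}(x)$. $\delta_{\ell,m}$ is the Kronecker delta. *)

From mathcomp Require Import all_boot all_order all_algebra.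
Set Implicit Arguments. Unset Strict Implicit. Unset Printing Implicit Defensive.
Import Order.TTheory GRing.Theory Num.Theory.
Local Open Scope ring_scope.

(* A neighborhood S_i with its fixed enumeration
   s^i_1, ..., s^i_kappa_i is a sequence [s : seq 'I_n] (0-based positions),
   kappa_i = size s. *)

(* Kronecker delta  delta_{l, s_j}  (false if j is out of range). *)
Definition is_node {n} (s : seq 'I_n) (j : nat) (l : 'I_n) : bool :=
  nth false [seq v == l | v <- s] j.

(* load x_{s_j} of the j-th node of s (0 if out of range). *)
Definition load_at {n} (x : 'I_n -> nat) (s : seq 'I_n) (j : nat) : nat :=
  nth 0%N [seq x v | v <- s] j.

Definition jmin {n} (s : seq 'I_n) (x : 'I_n -> nat) : nat :=
  find (fun v => all (fun w => (x v <= x w)%N) s) s.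

(* JSQ routing: an item arriving at neighborhood s in configuration x is
   stored at node s_{j_min(x)}. *)
Definition jsq_route {n} (s : seq 'I_n) (x : 'I_n -> nat) : 'I_n -> nat :=
  fun l => (x l + is_node s (jmin s x) l)%N.

Definition fdev {R : realFieldType} {n} (y : 'I_n -> nat) : R :=
  \sum_(l < n) ((y l)%:R - n%:R^-1 * \sum_(k < n) (y k)%:R) ^+ 2.

(* One step of the embedded JSQ load chain: the next arrival is at
   neighborhood i with probability lam i (Poisson rates with sum 1),
   and the chain then moves deterministically to jsq_route (s i) x. *)
Definition jsq_cond_exp {R : realFieldType} {n K} (lam : 'I_K -> R)
  (s : 'I_K -> seq 'I_n) (g : ('I_n -> nat) -> R) (x : 'I_n -> nat) : R :=
  \sum_(i < K) lam i * g (jsq_route (s i) x).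

From mathcomp Require Import all_boot all_order all_algebra.
From mathcomp Require Import ring.
Import Order.TTheory GRing.Theory Num.Theory.
Local Open Scope ring_scope.

(* Since f(y) = sum_l y_l^2 - (sum_l y_l)^2 / n, storing one item at node v
   changes f by 2 x_v + 1 - (2 S + 1)/n, where S is the total load.  Writing
   lambda_i = sum_j alpha_ij, the right-hand side involves the alpha-weighted
   sum of all neighborhood loads, which the node conditions on alpha turn
   into S/n; with sum_i lambda_i = 1 the two sides then agree. *)

Lemma fdevE (R : realFieldType) n (y : 'I_n -> nat) : (0 < n)%N ->
  fdev y = \sum_(l < n) (y l)%:R ^+ 2 - (\sum_(l < n) (y l)%:R) ^+ 2 / n%:R :> R.
Proof.
move=> n_gt0; rewrite /fdev; set S := \sum_(k < n) (y k)%:R : R.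
under eq_bigr do rewrite sqrrB.
rewrite !big_split /= sumrN sumr_const card_ord sumrMnl -mulr_suml -/S.
have n_neq0 : n%:R != 0 :> R by rewrite pnatr_eq0 -lt0n.
by rewrite -[(_ ^+ 2) *+ n]mulr_natr -[_ *+ 2]mulr_natr; field.
Qed.

Lemma fdev_add_unit (R : realFieldType) n (x y : 'I_n -> nat) (v : 'I_n) :
  (forall l, y l = x l + (v == l))%N ->
  fdev y - fdev x
  = 2 * (x v)%:R + 1 - (2 * \sum_(l < n) (x l)%:R + 1) / n%:R :> R.
Proof.
move=> yE; have n_gt0 : (0 < n)%N by case: n x y v yE => [|n] x y [].
have n_neq0 : n%:R != 0 :> R by rewrite pnatr_eq0 -lt0n.
have off_v (F : nat -> R) :
    \sum_(l < n | l != v) F (y l) = \sum_(l < n | l != v) F (x l).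
  by apply: eq_bigr => l /negPf ne_l; rewrite yE eq_sym ne_l addn0.
rewrite !fdevE // (bigD1 v) //= [\sum_(l < n) (y l)%:R](bigD1 v) //=.
rewrite [\sum_(l < n) (x l)%:R ^+ 2](bigD1 v) //= [\sum_(l < n) (x l)%:R](bigD1 v) //=.
rewrite (off_v (fun k => k%:R ^+ 2)) (off_v (fun k => k%:R)) yE eqxx natrD /=.
by field.
Qed.

Section Neighborhood.

Variables (n : nat) (s : seq 'I_n) (x : 'I_n -> nat).

Lemma has_minimizer : s != [::] -> has (fun v => all (fun w => x v <= x w)%N s) s.
Proof.
case: s => [//|a t] _; apply/hasP.
case: (arg_minnP x (mem_head a t)) => v v_in v_min.
by exists v => //; apply/allP => w /v_min.
Qed.

Lemma jmin_lt_size : s != [::] -> (jmin s x < size s)%N.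
Proof. by move=> s_ne; rewrite /jmin -has_find has_minimizer. Qed.

Lemma is_nodeE j l d : (j < size s)%N -> is_node s j l = (nth d s j == l).
Proof. by move=> lt_j; rewrite /is_node (nth_map d). Qed.

Lemma load_atE j d : (j < size s)%N -> load_at x s j = x (nth d s j).
Proof. by move=> lt_j; rewrite /load_at (nth_map d). Qed.

(* Holds for every j, both sides vanishing when j is out of range. *)
Lemma load_at_sum_is_node (R : pzSemiRingType) j :
  (load_at x s j)%:R = \sum_(l < n) (x l)%:R * (is_node s j l)%:R :> R.
Proof.
case: (ltnP j (size s)) => [lt_j | le_j].
  have d : 'I_n by case: s lt_j => [|d].
  under eq_bigr do rewrite (is_nodeE _ _ d) //.
  rewrite (load_atE _ d) // (bigD1 (nth d s j)) //= eqxx mulr1.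
  by rewrite big1 ?addr0 // => l /negPf ne_l; rewrite eq_sym ne_l mulr0.
rewrite /load_at nth_default ?size_map //.
by rewrite big1 // => l _; rewrite /is_node nth_default ?size_map // mulr0.
Qed.

Lemma fdev_jsq_route (R : realFieldType) : s != [::] ->
  fdev (jsq_route s x) - fdev x
  = 2 * (load_at x s (jmin s x))%:R + 1 - (2 * \sum_(l < n) (x l)%:R + 1) / n%:R :> R.
Proof.
move=> s_ne; have lt_jmin := jmin_lt_size s_ne.
have d : 'I_n by case: s s_ne.
rewrite (load_atE _ d) //; apply: fdev_add_unit => l.
by rewrite /jsq_route (is_nodeE _ _ d).
Qed.

End Neighborhood.

Lemma sum_off_index_gap (R : comPzRingType) (N k : nat) (a b : nat -> R) :
  \sum_(0 <= j < N | j != k) a j * (b j - b k)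
  = \sum_(0 <= j < N) a j * b j - (\sum_(0 <= j < N) a j) * b k.
Proof.
rewrite big_mkcond mulr_suml -sumrB; apply: eq_bigr => j _.
by case: eqP => [->|_]; rewrite ?subrr ?mulr0 ?mulrBr.
Qed.

Lemma sum_flow_load (R : realFieldType) n K (s : 'I_K -> seq 'I_n)
    (alpha : 'I_K -> nat -> R) (x : 'I_n -> nat) :
  (forall l : 'I_n,
     \sum_(i < K) \sum_(0 <= j < size (s i)) alpha i j * (is_node (s i) j l)%:R
     = n%:R^-1) ->
  \sum_(i < K) \sum_(0 <= j < size (s i)) alpha i j * (load_at x (s i) j)%:R
  = \sum_(l < n) (x l)%:R / n%:R.
Proof.
move=> flow; transitivity (\sum_(l < n) \sum_(i < K) \sum_(0 <= j < size (s i))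
    (x l)%:R * (alpha i j * (is_node (s i) j l)%:R)).
  rewrite exchange_big /=; apply: eq_bigr => i _.
  rewrite exchange_big /=; apply: eq_bigr => j _.
  by rewrite load_at_sum_is_node mulr_sumr; apply: eq_bigr => l _; rewrite mulrCA.
by apply: eq_bigr => l _; rewrite -(flow l) mulr_sumr; apply: eq_bigr => i _; rewrite mulr_sumr.
Qed.

Theorem lemma3p2 (R : realFieldType) (n K : nat)
  (s : 'I_K -> seq 'I_n) (lam : 'I_K -> R) (alpha : 'I_K -> nat -> R)
  (Hne : forall i, s i != [::])
  (Huniq : forall i, uniq (s i))
  (Hcover : forall l : 'I_n, exists i, l \in s i)
  (Hlam : forall i, 0 < lam i)
  (Hlam1 : \sum_(i < K) lam i = 1)
  (Halpha_pos : forall i j, (j < size (s i))%N -> 0 < alpha i j)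
  (Halpha_row : forall i, \sum_(0 <= j < size (s i)) alpha i j = lam i)
  (Halpha_node : forall l : 'I_n,
     \sum_(i < K) \sum_(0 <= j < size (s i)) alpha i j * (is_node (s i) j l)%:R
     = n%:R^-1)
  (x : 'I_n -> nat) :
  jsq_cond_exp lam s (fun y => fdev y - fdev x) x =
  - 2 * \sum_(i < K) \sum_(0 <= j < size (s i) | j != jmin (s i) x)
          alpha i j * ((load_at x (s i) j)%:R - (load_at x (s i) (jmin (s i) x))%:R)
  + 1 - n%:R^-1.
Proof.
set S := \sum_(l < n) (x l)%:R : R.
set m := fun i => (load_at x (s i) (jmin (s i) x))%:R : R.
rewrite /jsq_cond_exp.
under eq_bigr do rewrite fdev_jsq_route //.
under [X in _ = - 2 * X + _ - _]eq_bigr do rewrite sum_off_index_gap Halpha_row.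
rewrite sumrB sum_flow_load // -mulr_suml -/S.
have -> : \sum_i lam i * (2 * m i + 1 - (2 * S + 1) / n%:R)
          = 2 * \sum_i lam i * m i + (1 - (2 * S + 1) / n%:R) * \sum_i lam i.
  by rewrite !mulr_sumr -big_split; apply: eq_bigr => i _ /=; ring.
by rewrite Hlam1; ring.
Qed.
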